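(* In the transductive setting, assume $|y(x)|\le M$ for all $x\in X$. Let $W\in\mathbb{R}^{(m+u)\times(m+u)}$ be a symmetric nonnegative weight matrix with all row sums positive, $D$ the diagonal matrix with $D_{ii}=\sum_j W_{ij}$, $Q=I-D^{-1/2}WD^{-1/2}$, and $\mu>0$. For a training set $S$, let $y_S\in\mathbb{R}^{m+u}$ have $i$th entry $y(x_i)$ if $x_i\in S$ and $0$ otherwise, and let the Consistency Method return $h_S=(\mu^{-1}Q+I)^{-1}y_S$. Then for any two training sets $S,S'$ differing in exactly one point, $\|h_S-h_{S'}\|_\infty\le\sqrt2\,M$.
   Context: Transductive setting: fixed full sample $X=\{x_1,\dots,x_{m+u}\}$ with real labels $y(x)$; training set $S\subset X$ of size $m$ with labels revealed, test set $T=X\setminus S$ of size $u$. Two training sets $S,S'$ differ in exactly one point if $S'=(S\setminus\{x\})\cup\{x'\}$ with $x\in S$, $x'\in X\setminus S$. *)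

(* matrices over an arbitrary real closed field R (covers the reals). *)
From HB Require Import structures.
From mathcomp Require Import all_boot all_order all_algebra.
Set Implicit Arguments. Unset Strict Implicit. Unset Printing Implicit Defensive.
Import Order.TTheory GRing.Theory Num.Theory.
Local Open Scope ring_scope.

Definition degree (R : rcfType) (n : nat) (W : 'M[R]_n) (i : 'I_n) : R :=
  \sum_(j < n) W i j.

Definition Dinvsqrt (R : rcfType) (n : nat) (W : 'M[R]_n) : 'M[R]_n :=
  diag_mx (\row_i (Num.sqrt (degree W i))^-1).

Definition Qmat (R : rcfType) (n : nat) (W : 'M[R]_n) : 'M[R]_n :=
  1%:M - Dinvsqrt W *m W *m Dinvsqrt W.

Definition yS (R : rcfType) (n : nat) (y : 'I_n -> R) (S : {set 'I_n}) : 'cV[R]_n :=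
  \col_i (if i \in S then y i else 0).

Definition hS (R : rcfType) (n : nat) (W : 'M[R]_n) (mu : R)
    (y : 'I_n -> R) (S : {set 'I_n}) : 'cV[R]_n :=
  invmx (mu^-1 *: Qmat W + 1%:M) *m yS y S.

From HB Require Import structures.
From mathcomp Require Import all_boot all_order all_algebra.
Set Implicit Arguments. Unset Strict Implicit. Unset Printing Implicit Defensive.
Import Order.TTheory GRing.Theory Num.Theory.
Local Open Scope ring_scope.

(* Write A = mu^-1 Q + I.  The whole argument rests on one inequality:
   A does not shrink Euclidean norms, |h|_2 <= |A h|_2 for every h.
   - The normalized adjacency B = D^-1/2 W D^-1/2 satisfies h.Bh <= h.h:
     with a = D^-1/2 h this reads sum_ij W_ij a_i a_j <= sum_ij W_ij a_i^2,
     which holds for any symmetric nonnegative weights (2ab <= a^2 + b^2).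
     Hence Q = I - B is positive semidefinite.
   - For any positive semidefinite P and c >= 0, |(cP + I) h|^2
     = c^2 |Ph|^2 + 2c h.Ph + |h|^2 >= |h|^2.
   Consequently A is injective, hence invertible, and h_S - h_S' = A^-1 v
   with v = y_S - y_S' has |h_S - h_S'|_oo <= |A^-1 v|_2 <= |v|_2.  Since
   S and S' differ in one point, v has only two nonzero entries, each
   bounded by M, so |v|_2 <= sqrt 2 * M. *)

Definition dotv (R : pzRingType) (n : nat) (u v : 'cV[R]_n) : R :=
  \sum_i u i 0 * v i 0.

Definition sqnorm (R : pzRingType) (n : nat) (v : 'cV[R]_n) : R := dotv v v.

Section EuclideanNorm.
Variables (R : realFieldType) (n : nat).
Implicit Types (v h : 'cV[R]_n) (P : 'M[R]_n).

Lemma sqnorm_ge0 v : 0 <= sqnorm v.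
Proof. by apply: sumr_ge0 => i _; rewrite -expr2 sqr_ge0. Qed.

Lemma sqr_coord_le_sqnorm v i : v i 0 ^+ 2 <= sqnorm v.
Proof.
rewrite /sqnorm /dotv (bigD1 i) //= expr2 lerDl.
by apply: sumr_ge0 => j _; rewrite -expr2 sqr_ge0.
Qed.

Lemma sqnorm_eq0 v : sqnorm v = 0 -> v = 0.
Proof.
move=> v0; apply/colP => i; rewrite mxE; apply/eqP; rewrite -sqrf_eq0.
by rewrite eq_le sqr_ge0 andbT -v0 sqr_coord_le_sqnorm.
Qed.

Lemma psd_shift_sqnorm_le P (c : R) v :
  (forall h, 0 <= dotv h (P *m h)) -> 0 <= c ->
  sqnorm v <= sqnorm ((c *: P + 1%:M) *m v).
Proof.
move=> Ppsd c0; set g := P *m v.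
have expand : sqnorm ((c *: P + 1%:M) *m v)
    = sqnorm (c *: g) + dotv v g * c *+ 2 + sqnorm v.
  rewrite /sqnorm /dotv mulr_suml -sumrMnl -!big_split /=.
  apply: eq_bigr => i _; rewrite mulmxDl mul1mx -scalemxAl !mxE -/g.
  rewrite -!expr2 sqrrD; congr (_ + _ *+ 2 + _).
  by rewrite [RHS]mulrC mulrA mulrAC.
rewrite expand lerDr addr_ge0 ?sqnorm_ge0 //.
by rewrite mulrn_wge0 // mulr_ge0.
Qed.

Lemma unitmx_of_injective P :
  (forall h, P *m h = 0 -> h = 0) -> P \in unitmx.
Proof.
move=> Pinj; rewrite unitmxE unitfE -det_tr; apply/det0P => -[w w_neq0 wP0].
have : w^T = 0 by apply: Pinj; apply: trmx_inj; rewrite trmx_mul trmxK wP0 trmx0.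
by move/(congr1 trmx); rewrite trmxK trmx0; apply/eqP.
Qed.

End EuclideanNorm.

(* For symmetric nonnegative weights, the weighted "cross" sum is dominated by
   the weighted "diagonal" sum; this is sum_ij W_ij (a_i - a_j)^2 >= 0. *)
Lemma weighted_cross_le (R : realFieldType) (n : nat) (W : 'M[R]_n)
    (Wsym : W^T = W) (Wnneg : forall i j, 0 <= W i j) (a : 'I_n -> R) :
  \sum_i \sum_j W i j * (a i * a j) <= \sum_i \sum_j W i j * a i ^+ 2.
Proof.
have swap : \sum_i \sum_j W i j * a j ^+ 2 = \sum_i \sum_j W i j * a i ^+ 2.
  rewrite exchange_big /=; apply: eq_bigr => i _; apply: eq_bigr => j _.
  by rewrite -{1}Wsym mxE.
rewrite -(ler_pM2l (ltr0Sn R 1)) [X in _ <= X]mulr_natl [X in _ <= X]mulr2n.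
rewrite -{2}swap -big_split /=.
rewrite mulr_sumr; apply: ler_sum => i _.
rewrite mulr_sumr -big_split; apply: ler_sum => j _ /=.
rewrite -mulrDr mulrCA mulr_natl; apply: ler_wpM2l => //.
by have := sqr_ge0 (a i - a j); rewrite sqrrB addrAC subr_ge0.
Qed.

Section NormalizedLaplacian.
Variables (R : rcfType) (n : nat) (W : 'M[R]_n).
Hypothesis Wsym : W^T = W.
Hypothesis Wnneg : forall i j, 0 <= W i j.
Hypothesis Wpos : forall i, 0 < \sum_(j < n) W i j.

Let s i := Num.sqrt (degree W i).

Lemma sqrt_degree_neq0 i : s i != 0.
Proof. by rewrite sqrtr_eq0 -ltNge; apply: Wpos. Qed.

Lemma normalized_adjacency_entry i j :
  (Dinvsqrt W *m W *m Dinvsqrt W) i j = (s i)^-1 * W i j * (s j)^-1.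
Proof. by rewrite /Dinvsqrt mul_mx_diag mul_diag_mx !mxE. Qed.

(* The normalized adjacency B = D^-1/2 W D^-1/2 has quadratic form at most
   the identity: substitute h = D^1/2 a and use weighted_cross_le. *)
Lemma normalized_adjacency_form_le h :
  dotv h (Dinvsqrt W *m W *m Dinvsqrt W *m h) <= sqnorm h.
Proof.
pose a i := h i 0 / s i.
have ha i : h i 0 = a i * s i by rewrite /a divfK // sqrt_degree_neq0.
clearbody a.
have form : dotv h (Dinvsqrt W *m W *m Dinvsqrt W *m h)
    = \sum_i \sum_j W i j * (a i * a j).
  apply: eq_bigr => i _; rewrite mxE big_distrr /=; apply: eq_bigr => j _.
  rewrite (normalized_adjacency_entry i j) (ha i) (ha j) [a j * s j]mulrC !mulrA.
  by rewrite (mulfK (sqrt_degree_neq0 i)) (mulfVK (sqrt_degree_neq0 j)) [a i * _]mulrC.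
have norm : sqnorm h = \sum_i \sum_j W i j * a i ^+ 2.
  apply: eq_bigr => i _; rewrite -big_distrl /= -expr2 (ha i) exprMn.
  by rewrite sqr_sqrtr ?(ltW (Wpos i)) // mulrC.
by rewrite form norm weighted_cross_le.
Qed.

Lemma Qmat_psd h : 0 <= dotv h (Qmat W *m h).
Proof.
rewrite /Qmat mulmxBl mul1mx /dotv.
under eq_bigr do rewrite 2!mxE mulrBr.
by rewrite sumrB subr_ge0 normalized_adjacency_form_le.
Qed.

Lemma consistency_sqnorm_le (mu : R) h : 0 < mu ->
  sqnorm h <= sqnorm ((mu^-1 *: Qmat W + 1%:M) *m h).
Proof.
by move=> mu0; apply: psd_shift_sqnorm_le; [exact: Qmat_psd | rewrite invr_ge0 ltW].
Qed.

Lemma consistency_unitmx (mu : R) : 0 < mu -> mu^-1 *: Qmat W + 1%:M \in unitmx.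
Proof.
move=> mu0; apply: unitmx_of_injective => h Ah0; apply: sqnorm_eq0.
apply/eqP; rewrite eq_le sqnorm_ge0 andbT.
apply: le_trans (consistency_sqnorm_le h mu0) _; rewrite Ah0.
by rewrite /sqnorm /dotv big1 // => i _; rewrite mxE mul0r.
Qed.

End NormalizedLaplacian.

(* Replacing one training point changes the label vector y_S in exactly two
   coordinates, each by at most M in absolute value. *)
Lemma yS_swap_sqnorm_le (R : rcfType) (n : nat) (y : 'I_n -> R) (M : R)
    (hM : forall i, `|y i| <= M) (S : {set 'I_n}) (x x' : 'I_n)
    (hx : x \in S) (hx' : x' \notin S) :
  sqnorm (yS y S - yS y ((S :\ x) :|: [set x'])) <= 2 * M ^+ 2.
Proof.
have yM k : y k * y k <= M ^+ 2.
  by rewrite expr2 (le_trans (ler_norm _)) // normrM ler_pM ?normr_ge0.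
have xx' : x != x' by apply: contraNneq hx' => <-.
rewrite /sqnorm /dotv (bigD1 x) //= (bigD1 x') 1?eq_sym //= big1 => [|k /andP[kx kx']].
- rewrite !mxE !in_setU !in_setD1 !in_set1 eqxx (negbTE xx') eq_sym (negbTE xx').
  rewrite hx (negbTE hx') /= subr0 sub0r eqxx mulrNN addr0.
  by rewrite mulr_natl mulr2n lerD.
- rewrite !mxE in_setU in_setD1 in_set1 (negbTE kx) (negbTE kx') /= orbF.
  by rewrite subrr mul0r.
Qed.

Theorem mainTheorem9 (R : rcfType) (m u : nat) (y : 'I_(m + u) -> R) (M : R)
    (hM : forall i, `|y i| <= M)
    (W : 'M[R]_(m + u))
    (Wsym : W^T = W)
    (Wnneg : forall i j, 0 <= W i j)
    (Wpos : forall i, 0 < \sum_(j < m + u) W i j)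
    (mu : R) (hmu : 0 < mu)
    (S : {set 'I_(m + u)}) (hS_card : #|S| = m)
    (x x' : 'I_(m + u)) (hx : x \in S) (hx' : x' \notin S) :
  forall i : 'I_(m + u),
    `|hS W mu y S i 0 - hS W mu y ((S :\ x) :|: [set x']) i 0|
      <= Num.sqrt 2 * M.
Proof.
move=> i; set A := mu^-1 *: Qmat W + 1%:M.
set v := yS y S - yS y ((S :\ x) :|: [set x']).
set h := invmx A *m v.
have -> : hS W mu y S i 0 - hS W mu y ((S :\ x) :|: [set x']) i 0 = h i 0.
  by rewrite /hS /h /v mulmxBr !mxE.
have Ah : A *m h = v by rewrite /h mulKVmx // consistency_unitmx.
have hi_le : h i 0 ^+ 2 <= 2 * M ^+ 2.
  apply: le_trans (sqr_coord_le_sqnorm h i) _.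
  apply: le_trans (consistency_sqnorm_le Wsym Wnneg Wpos h hmu) _.
  by rewrite -/A Ah yS_swap_sqnorm_le.
have M0 : 0 <= M by apply: le_trans (hM x).
by rewrite -sqrtr_sqr -(ger0_norm M0) -sqrtr_sqr -sqrtrM ?ler0n // ler_wsqrtr.
Qed.
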